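(* Assume $\le_m$ and $\le_s$ are compatible. Then the set $\{LM(sp): sp\in\mathcal{SP}^*\text{ is top-irreducible}\}$ is finite; that is, the top-reduced S-Gröbner basis of $\mathcal{SP}$ is finite up to equivalence (sig-polynomials with the same leading pair being identified).
   Context: Let $k$ be a field, $R=k[x_1,\dots,x_n]$, $\mathcal{M}$ the monoid of monomials, $\mathbf{e}_1,\dots,\mathbf{e}_d$ the standard basis of $R^d$, $\mathcal{M}_d=\{m\mathbf{e}_i\}$, $\lambda\cdot(\mu\mathbf{e}_i)=(\lambda\mu)\mathbf{e}_i$, and $m_1\mathbf{e}_i\mid m_2\mathbf{e}_j$ iff $i=j$ and $m_1\mid m_2$. An admissible monomial order $\le_m$: linear order on $\mathcal{M}$ with $1\le_m m$ and $m_1\le_m m_2\Rightarrow tm_1\le_m tm_2$. An admissible module order $\le_s$: linear order on $\mathcal{M}_d$ with $\mathbf{e}_i\le_s m\mathbf{e}_i$ and $m_1\mathbf{e}_i\le_s m_2\mathbf{e}_i\Rightarrow tm_1\mathbf{e}_i\le_s tm_2\mathbf{e}_i$. Compatible: $\sigma\mathbf{e}_j\le_s\tau\mathbf{e}_j\iff\sigma\le_m\tau$ for all $j,\sigma,\tau$. Fix $f_1,\dots,f_d\in R$. $\mathcal{SP}=\{(\mathbf{u},p)\in R^d\times R:\sum_iu_if_i=p\}$, $\mathcal{SP}^*=\mathcal{SP}\setminus\{(\mathbf{0},0)\}$, $\mathbf{NSP}=\{(\mathbf{u},p)\in\mathcal{SP}:p\ne0\}$. For $(\mathbf{u},p)\in\mathcal{SP}^*$: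 signature $lm(\mathbf{u})$ = $\le_s$-largest element of $\mathcal{M}_d$ in the support of $\mathbf{u}$; $lm(p)$ = $\le_m$-leading monomial ($lm(0)=0$); leading pair $LM(\mathbf{u},p)=(lm(\mathbf{u}),lm(p))$. Relations on leading pairs: $(\mathbf{s}',m')\prec_{m,s}(\mathbf{s},m)$ iff $m',m\ne0$ and $\exists\lambda\in\mathcal{M}$: $\lambda m'=m$, $\lambda\mathbf{s}'<_s\mathbf{s}$. $(\mathbf{s}',m')\prec_{s,m}(\mathbf{s},m)$ iff either ($m',m\ne0$ and $\exists\lambda$: $\lambda\mathbf{s}'=\mathbf{s}$, $\lambda m'<_m m$) or ($m'=0$, $m\ne0$, $\mathbf{s}'\mid\mathbf{s}$). $(\mathbf{s}',m')\mid_{super}(\mathbf{s},m)$ iff either ($m',m\ne0$ and $\exists\lambda$: $\lambda\mathbf{s}'=\mathbf{s}$, $\lambda m'=m$) or ($m'=m=0$ and $\mathbf{s}'\mid\mathbf{s}$). A sig-polynomial $sp\in\mathcal{SP}^*$ is top-irreducible if there is no $sp'\in\mathcal{SP}^*$ with $LM(sp')\prec_{m,s}LM(sp)$ or $LM(sp')\prec_{s,m}LM(sp)$, and no $sp'\in\mathcal{SP}^*$ with $LM(sp')\mid_{super}LM(sp)$ and $LM(sp')\ne LM(sp)$. The top-reduced S-Gröbner basis is the set of top-irreducible sig-polynomials. *)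

From HB Require Import structures.
From mathcomp Require Import all_boot all_order all_algebra.
Set Implicit Arguments. Unset Strict Implicit. Unset Printing Implicit Defensive.
Import GRing.Theory.

Definition mono (n : nat) := {ffun 'I_n -> nat}.

Definition mone (n : nat) : mono n := [ffun => 0%N].
Definition mmul (n : nat) (a b : mono n) : mono n := [ffun i => (a i + b i)%N].
Definition mdiv (n : nat) (a b : mono n) : bool := [forall i, (a i <= b i)%N].
Definition msub (n : nat) (a b : mono n) : mono n := [ffun i => (a i - b i)%N].

Definition polyf (k : fieldType) (n : nat) := mono n -> k.

Definition is_poly (k : fieldType) (n : nat) (p : polyf k n) : Prop :=
  exists s : seq (mono n), forall m, p m != 0%R -> m \in s.

Definition mono_of (n B : nat) (a : {ffun 'I_n -> 'I_B}) : mono n :=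
  [ffun i => nat_of_ord (a i)].

(* product: (p*q)(m) = sum over divisors a of m of p(a) q(m/a);
   every divisor a of m has a i <= max_j m j, so it is represented
   exactly once by an element of {ffun 'I_n -> 'I_(max+1)}. *)
Definition pmul (k : fieldType) (n : nat) (p q : polyf k n) : polyf k n :=
  fun m => (\sum_(a : {ffun 'I_n -> 'I_((\max_(i < n) m i).+1)}
                 | mdiv (mono_of a) m)
              p (mono_of a) * q (msub m (mono_of a)))%R.

(* ---------- module monomials m e_i, represented as pairs (m, i) ---------- *)
Definition mmono (n d : nat) := (mono n * 'I_d)%type.
Definition smul (n d : nat) (l : mono n) (s : mmono n d) : mmono n d :=
  (mmul l s.1, s.2).
Definition sdiv (n d : nat) (s t : mmono n d) : bool :=
  (s.2 == t.2) && mdiv s.1 t.1.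

Definition linear_order (T : Type) (le : T -> T -> Prop) : Prop :=
  [/\ forall x, le x x,
      forall x y, le x y -> le y x -> x = y,
      forall x y z, le x y -> le y z -> le x z &
      forall x y, le x y \/ le y x].

Definition admissible_monomial_order (n : nat) (leM : mono n -> mono n -> Prop) :=
  [/\ linear_order leM,
      forall m, leM (mone n) m &
      forall t m1 m2, leM m1 m2 -> leM (mmul t m1) (mmul t m2)].

Definition admissible_module_order (n d : nat)
    (leS : mmono n d -> mmono n d -> Prop) :=
  [/\ linear_order leS,
      forall (i : 'I_d) m, leS (mone n, i) (m, i) &
      forall (i : 'I_d) t m1 m2, leS (m1, i) (m2, i) ->
         leS (mmul t m1, i) (mmul t m2, i)].

Definition compatible (n d : nat) (leM : mono n -> mono n -> Prop)
    (leS : mmono n d -> mmono n d -> Prop) :=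
  forall (j : 'I_d) s t, leS (s, j) (t, j) <-> leM s t.

Definition is_sp (k : fieldType) (n d : nat) (f : 'I_d -> polyf k n)
    (u : 'I_d -> polyf k n) (p : polyf k n) : Prop :=
  [/\ forall i, is_poly (u i), is_poly p &
      forall m, (\sum_(i < d) pmul (u i) (f i) m)%R = p m].

Definition is_spstar (k : fieldType) (n d : nat) (f : 'I_d -> polyf k n)
    (u : 'I_d -> polyf k n) (p : polyf k n) : Prop :=
  is_sp f u p /\ ((exists i m, u i m != 0%R) \/ (exists m, p m != 0%R)).

(* leading pairs: (signature, leading monomial), None standing for lm(0)=0 *)
Definition lpair (n d : nat) := (mmono n d * option (mono n))%type.

Definition sig_is (k : fieldType) (n d : nat) (leS : mmono n d -> mmono n d -> Prop)
    (u : 'I_d -> polyf k n) (s : mmono n d) : Prop :=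
  u s.2 s.1 != 0%R /\ forall t : mmono n d, u t.2 t.1 != 0%R -> leS t s.

Definition lm_is (k : fieldType) (n : nat) (leM : mono n -> mono n -> Prop)
    (p : polyf k n) (o : option (mono n)) : Prop :=
  match o with
  | None => forall m, p m = 0%R
  | Some a => p a != 0%R /\ forall m, p m != 0%R -> leM m a
  end.

Definition LM_is (k : fieldType) (n d : nat) (leM : mono n -> mono n -> Prop)
    (leS : mmono n d -> mmono n d -> Prop)
    (u : 'I_d -> polyf k n) (p : polyf k n) (lp : lpair n d) : Prop :=
  sig_is leS u lp.1 /\ lm_is leM p lp.2.

Definition prec_ms (n d : nat) (leS : mmono n d -> mmono n d -> Prop)
    (lp' lp : lpair n d) : Prop :=
  match lp'.2, lp.2 with
  | Some m', Some m =>
      exists l : mono n, mmul l m' = m /\ leS (smul l lp'.1) lp.1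
                         /\ smul l lp'.1 <> lp.1
  | _, _ => False
  end.

Definition prec_sm (n d : nat) (leM : mono n -> mono n -> Prop)
    (lp' lp : lpair n d) : Prop :=
  match lp'.2, lp.2 with
  | Some m', Some m =>
      exists l : mono n, smul l lp'.1 = lp.1 /\ leM (mmul l m') m
                         /\ mmul l m' <> m
  | None, Some _ => sdiv lp'.1 lp.1
  | _, _ => False
  end.

Definition super_div (n d : nat) (lp' lp : lpair n d) : Prop :=
  match lp'.2, lp.2 with
  | Some m', Some m => exists l : mono n, smul l lp'.1 = lp.1 /\ mmul l m' = m
  | None, None => sdiv lp'.1 lp.1
  | _, _ => False
  end.

Definition top_irreducible (k : fieldType) (n d : nat) (f : 'I_d -> polyf k n)
    (leM : mono n -> mono n -> Prop) (leS : mmono n d -> mmono n d -> Prop)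
    (u : 'I_d -> polyf k n) (p : polyf k n) : Prop :=
  is_spstar f u p /\
  forall (u' : 'I_d -> polyf k n) (p' : polyf k n) (lp' lp : lpair n d),
    is_spstar f u' p' -> LM_is leM leS u' p' lp' -> LM_is leM leS u p lp ->
    [/\ ~ prec_ms leS lp' lp, ~ prec_sm leM lp' lp &
        (super_div lp' lp -> lp' = lp)].

(* The proof is Dickson's lemma in antichain form.  A leading pair
   ((s, i), o) is read as a point of nat^(2n) -- the exponents of the
   signature monomial s and of the leading monomial o (zeros when o = 0) --
   together with a "colour" (i, o <> 0) taken from a finite set.
   1. Dickson's lemma: a set of points of nat^K (K finite) in which no two
      distinct points are coordinatewise comparable is finite; the coloured
      variant allows comparisons only between points of the same colour.
   2. Key lemma: if two leading pairs of the same colour are coordinatewise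
      comparable and the larger one is the leading pair of a top-irreducible
      sig-polynomial, they are equal.  Writing s = l1 s' and m = l2 m', the
      cases l1 = l2, l1 < l2 and l2 < l1 produce a super-divisor, a
      (s,m)-smaller pair or an (m,s)-smaller pair (the latter by
      compatibility of the orders), all forbidden by top-irreducibility.
   The theorem follows by applying (1) to the set of leading pairs of
   top-irreducible sig-polynomials, which is an antichain by (2). *)
From HB Require Import structures.
From mathcomp Require Import all_boot all_order all_algebra.
From Stdlib Require Import Classical.

Set Implicit Arguments.
Unset Strict Implicit.
Unset Printing Implicit Defensive.

Definition finite_set (T : eqType) (P : T -> Prop) : Prop :=
  exists s : seq T, forall x, P x -> x \in s.

Lemma finite_subset (T : eqType) (P Q : T -> Prop) :
  (forall x, P x -> Q x) -> finite_set Q -> finite_set P.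
Proof. by move=> PQ [s Hs]; exists s => x /PQ /Hs. Qed.

Lemma finite_bigunion (I T : eqType) (r : seq I) (P : I -> T -> Prop) :
  (forall i, i \in r -> finite_set (P i)) ->
  finite_set (fun x => exists2 i, i \in r & P i x).
Proof.
elim: r => [|i r IH] finP; first by exists [::] => x [].
have [s1 Hs1] := IH (fun j rj => finP j (@mem_behead _ (i :: r) j rj)).
have [s2 Hs2] := finP i (mem_head i r).
exists (s2 ++ s1) => x [j]; rewrite in_cons mem_cat => /orP[/eqP->|rj] Pjx.
  by rewrite Hs2.
by rewrite Hs1 ?orbT //; exists j.
Qed.

(* By induction on the number of coordinates: fixing a in P, every
   other x in P lies strictly below a in some coordinate c, and each level
   set {co x c = v} is an antichain for the remaining coordinates. *)
Lemma dickson_antichain (T K : eqType) (co : T -> K -> nat) (cs : seq K)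
    (P : T -> Prop) :
  (forall a b, P a -> P b -> all (fun c => co a c <= co b c) cs -> a = b) ->
  finite_set P.
Proof.
have [N] := ubnP (size cs); elim: N cs P => // N IH cs P /ltnSE size_cs antiP.
have [[a Pa]|noP] := classic (exists a, P a); last first.
  by exists [::] => x Px; case: noP; exists x.
have below c : c \in cs -> finite_set (fun x => P x /\ co x c < co a c).
  move=> cs_c.
  have level v : v \in iota 0 (co a c) -> finite_set (fun x => P x /\ co x c = v).
    move=> _; apply: (IH (rem c cs)).
      by rewrite size_rem // (leq_trans _ size_cs) // ltn_predL; case: (cs) cs_c.
    move=> x y [Px xv] [Py yv] le_xy; apply: antiP => //.
    by rewrite (perm_all _ (perm_to_rem cs_c)) /= xv yv leqnn.
  apply: finite_subset (finite_bigunion level) => x [Px lt_xa].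
  by exists (co x c); rewrite ?mem_iota.
have [s Hs] := finite_bigunion below.
exists (a :: s) => x Px; rewrite in_cons.
have [le_ax|] := boolP (all (fun c => co a c <= co x c) cs).
  by rewrite (antiP a x Pa Px le_ax) eqxx.
case/allPn=> c cs_c; rewrite -ltnNge => lt_xa.
by rewrite Hs ?orbT //; exists c.
Qed.

Lemma dickson_antichain_coloured (T K : eqType) (C : finType) (col : T -> C)
    (co : T -> K -> nat) (cs : seq K) (P : T -> Prop) :
  (forall a b, P a -> P b -> col a = col b ->
     all (fun c => co a c <= co b c) cs -> a = b) ->
  finite_set P.
Proof.
move=> antiP.
have part c : c \in enum C -> finite_set (fun x => P x /\ col x = c).
  move=> _; apply: (@dickson_antichain _ _ co cs) => a b [Pa ca] [Pb cb].
  by apply: antiP => //; rewrite ca cb.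
apply: finite_subset (finite_bigunion part) => x Px.
by exists (col x); rewrite ?mem_enum.
Qed.

Lemma mmulC (n : nat) (a b : mono n) : mmul a b = mmul b a.
Proof. by apply/ffunP => j; rewrite !ffunE addnC. Qed.

Lemma msubK (n : nat) (a b : mono n) : mdiv a b -> mmul (msub b a) a = b.
Proof. by move/forallP => le_ab; apply/ffunP => j; rewrite !ffunE subnK. Qed.

Lemma mmulIr (n : nat) (a l l' : mono n) : mmul l a = mmul l' a -> l = l'.
Proof.
move=> E; apply/ffunP => j; have := congr1 (fun g : mono n => g j) E.
by rewrite !ffunE => /addIn.
Qed.

Section LeadingPairs.

Variables n d : nat.

Definition lp_colour (lp : lpair n d) : 'I_d * bool := (lp.1.2, isSome lp.2).

Definition lp_exponent (lp : lpair n d) (c : 'I_n + 'I_n) : nat :=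
  match c with
  | inl j => lp.1.1 j
  | inr j => if lp.2 is Some m then m j else 0
  end.

Definition lp_divides (lp' lp : lpair n d) : Prop :=
  sdiv lp'.1 lp.1 /\
  match lp'.2, lp.2 with
  | Some m', Some m => mdiv m' m
  | None, None => True
  | _, _ => False
  end.

Lemma lp_exponent_divides (lp' lp : lpair n d) :
  lp_colour lp' = lp_colour lp ->
  all (fun c => lp_exponent lp' c <= lp_exponent lp c) (enum {: 'I_n + 'I_n}) ->
  lp_divides lp' lp.
Proof.
case: lp' lp => [[s' i'] o'] [[s i] o] [<- same_kind] /allP le_exp.
have le_c c : lp_exponent (s', i', o') c <= lp_exponent (s, i', o) c.
  by apply: le_exp; rewrite mem_enum.
split; first by rewrite /sdiv /= eqxx; apply/forallP => j; exact: le_c (inl j).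
case: o' o same_kind le_c {le_exp} => [m'|] [m|] //= _ le_c.
by apply/forallP => j; exact: le_c (inr j).
Qed.

Lemma top_irreducible_lp_divides (k : fieldType) (f : 'I_d -> polyf k n)
    (leM : mono n -> mono n -> Prop) (leS : mmono n d -> mmono n d -> Prop)
    (u' u : 'I_d -> polyf k n) (p' p : polyf k n) (lp' lp : lpair n d) :
  admissible_monomial_order leM -> compatible leM leS ->
  is_spstar f u' p' -> LM_is leM leS u' p' lp' ->
  top_irreducible f leM leS u p -> LM_is leM leS u p lp ->
  lp_divides lp' lp -> lp' = lp.
Proof.
move=> [[_ _ _ leM_total] _ leM_mono] compat sp' LM' [_ irr] LM.
have [no_ms no_sm no_super] := irr u' p' lp' lp sp' LM' LM.
case: lp' lp {LM' LM} no_ms no_sm no_super => [[s' i'] o'] [[s i] o].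
rewrite /lp_divides /sdiv /= => no_ms no_sm no_super [/andP[/eqP eq_i div_s]].
subst i'.
case: o' o no_ms no_sm no_super => [m'|] [m|] //= no_ms no_sm no_super div_m;
  last by apply: no_super; rewrite /super_div /sdiv /= eqxx.
have e1 : mmul (msub s s') s' = s := msubK div_s.
have e2 : mmul (msub m m') m' = m := msubK div_m.
set l1 := msub s s' in e1 *; set l2 := msub m m' in e2 *.
have [eq_l|ne_l] := eqVneq l1 l2.
  by apply: no_super; exists l1; rewrite /smul /= e1 eq_l e2.
case: (leM_total l1 l2) => le_l; exfalso.
- (* (l1 s', l1 m') has the signature of (s, m) and a smaller monomial *)
  apply: no_sm; exists l1; split; first by rewrite /smul /= e1.
  split; first by rewrite -e2 mmulC (mmulC l2); exact: leM_mono.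
  by rewrite -e2 => /mmulIr eq_l; rewrite eq_l eqxx in ne_l.
- (* (l2 s', l2 m') has the monomial of (s, m) and a smaller signature *)
  apply: no_ms; exists l2; split => //; rewrite /smul /= -e1; split.
    by apply/compat; rewrite mmulC (mmulC l1); exact: leM_mono.
  by case=> /mmulIr eq_l; rewrite eq_l eqxx in ne_l.
Qed.

End LeadingPairs.

Theorem mainTheorem6 (k : fieldType) (n d : nat) (f : 'I_d -> polyf k n)
    (leM : mono n -> mono n -> Prop) (leS : mmono n d -> mmono n d -> Prop) :
  (forall i, is_poly (f i)) ->
  admissible_monomial_order leM ->
  admissible_module_order leS ->
  compatible leM leS ->
  exists S : seq (lpair n d),
    forall (u : 'I_d -> polyf k n) (p : polyf k n),
      top_irreducible f leM leS u p ->
      forall lp : lpair n d, LM_is leM leS u p lp -> lp \in S.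
Proof.
move=> _ leM_adm _ compat.
pose top_lp lp := exists u p,
  top_irreducible f leM leS u p /\ LM_is leM leS u p lp.
have [S HS] : finite_set top_lp.
  apply: (@dickson_antichain_coloured _ _ _ (@lp_colour n d) (@lp_exponent n d)
            (enum {: 'I_n + 'I_n})).
  move=> a b [u' [p' [[sp' _] LMa]]] [u [p [irr LMb]]] same le_exp.
  apply: (top_irreducible_lp_divides leM_adm compat sp' LMa irr LMb).
  exact: lp_exponent_divides.
by exists S => u p irr lp LM; apply: HS; exists u, p.
Qed.
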